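(* Let $\psi,\phi\in \mathbf{\Psi}_n$, and set $m:=\min_{t\in\Omega_n}\frac{\psi(t)}{\phi(t)}$, $M:=\max_{t\in\Omega_n}\frac{\psi(t)}{\phi(t)}$, $m^*:=\min_{s\in\Omega_n}\frac{\psi^*(s)}{\phi^*(s)}$, $M^*:=\max_{s\in\Omega_n}\frac{\psi^*(s)}{\phi^*(s)}$. Then: (i) $\frac{1}{n}\le m\le \frac{\psi(t)}{\phi(t)} \le M\le n$ for all $t\in\Omega_n$; (ii) $\frac{1}{n}\le m^*\le \frac{\psi^*(t)}{\phi^*(t)}\le M^*\le n$ for all $t\in\Omega_n$; (iii) $m\cdot M^*= M\cdot m^*=1$; (iv) $m\cdot|\!|\!|\cdot|\!|\!|_{\phi}\le|\!|\!|\cdot|\!|\!|_{\psi}\le M\cdot|\!|\!|\cdot|\!|\!|_{\phi}$; (v) $\frac{1}{M}\cdot|\!|\!|\cdot|\!|\!|_{\phi^*}\le|\!|\!|\cdot|\!|\!|_{\psi^*}\le\frac{1}{m}\cdot|\!|\!|\cdot|\!|\!|_{\phi^*}$; (vi) $\psi\ge\phi$ if and only if $\psi^*\le\phi^*$; (vii) $\psi\le\phi$ if and only if $\psi^*\ge\phi^*$.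
   Context: Let $(X,\|\cdot\|)$ be a normed vector space, $n\ge2$. $\Omega_n:=\{t\in\mathbb{R}^n\mid t_i\ge0,\ \sum_i t_i=1\}$, $\Omega_n^\circ:=\{t\in\Omega_n\mid t_i<1\ \forall i\}$. $\mathbf{\Psi}_n$ is the class of convex continuous $\psi:\Omega_n\to\mathbb{R}$ with (B1) $\psi(\mathbf{e}_i)=1$ for all standard unit vectors $\mathbf{e}_i$ and (B2) $\psi(t)\ge(1-t_i)\psi\big(\frac{t_1}{1-t_i},\ldots,\frac{t_{i-1}}{1-t_i},0,\frac{t_{i+1}}{1-t_i},\ldots,\frac{t_n}{1-t_i}\big)$ for all $t\in\Omega_n^\circ$, $i=1,\ldots,n$. For $\psi\in\mathbf{\Psi}_n$, the dual function is $\psi^*(s):=\max_{t\in\Omega_n}\frac{\langle t,s\rangle}{\psi(t)}$, $s\in\Omega_n$. The norm $|\!|\!|\cdot|\!|\!|_\psi$ on $X^n$ is $|\!|\!|x|\!|\!|_\psi:=\big(\sum_{i}\|x_i\|\big)\,\psi\big(\frac{\|x_1\|}{\sum_{i}\|x_i\|},\ldots,\frac{\|x_n\|}{\sum_{i}\|x_i\|}\big)$ for $x\ne0$, $|\!|\!|0|\!|\!|_\psi:=0$; $|\!|\!|\cdot|\!|\!|_{\psi^*}$ denotes its dual norm on $(X^n)^*\cong(X^* )^n$, which equals the analogous construction with $\psi^*$ and the dual norm on $X^*$. Inequalities $\psi\ge\phi$ etc. are pointwise on $\Omega_n$. *)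

From HB Require Import structures.
From mathcomp Require Import all_boot all_order all_algebra.
From mathcomp Require Import all_classical all_reals all_analysis.
Set Implicit Arguments. Unset Strict Implicit. Unset Printing Implicit Defensive.
Import Order.TTheory GRing.Theory Num.Theory.
Import numFieldNormedType.Exports.
Local Open Scope classical_set_scope.
Local Open Scope ring_scope.

Section Defs.
Variable R : realType.

Definition Omega (n : nat) (t : 'rV[R]_n) : Prop :=
  (forall i, 0 <= t ord0 i) /\ \sum_i t ord0 i = 1.
Arguments Omega : clear implicits.

Definition Omega_int (n : nat) (t : 'rV[R]_n) : Prop :=
  Omega n t /\ forall i, t ord0 i < 1.
Arguments Omega_int : clear implicits.

Definition unitv (n : nat) (i : 'I_n) : 'rV[R]_n := \row_j (j == i)%:R.

Definition drop_coord (n : nat) (t : 'rV[R]_n) (i : 'I_n) : 'rV[R]_n :=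
  \row_j (if j == i then 0 else t ord0 j / (1 - t ord0 i)).

Definition PsiClass (n : nat) (psi : 'rV[R]_n -> R) : Prop :=
  (forall t s, Omega n t -> Omega n s -> forall l : R, 0 <= l <= 1 ->
     psi (l *: t + (1 - l) *: s) <= l * psi t + (1 - l) * psi s) /\
  {within Omega n, continuous psi} /\
  (forall i, psi (unitv i) = 1) /\
  (forall t, Omega_int n t -> forall i,
     psi t >= (1 - t ord0 i) * psi (drop_coord t i)).

Definition dotv (n : nat) (t s : 'rV[R]_n) : R := \sum_i t ord0 i * s ord0 i.

(* dual function: psi^*(s) = max_{t in Omega_n} <t,s>/psi(t) (the max is attained,
   so it equals the supremum) *)
Definition dualfun (n : nat) (psi : 'rV[R]_n -> R) (s : 'rV[R]_n) : R :=
  sup [set dotv t s / psi t | t in Omega n].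

(* min and max of ratios over Omega_n (attained, hence = inf / sup) *)
Definition ratio_min (n : nat) (psi phi : 'rV[R]_n -> R) : R :=
  inf [set psi t / phi t | t in Omega n].
Definition ratio_max (n : nat) (psi phi : 'rV[R]_n -> R) : R :=
  sup [set psi t / phi t | t in Omega n].

Definition psinorm (X : normedModType R) (n : nat) (psi : 'rV[R]_n -> R)
  (x : 'I_n -> X) : R :=
  let S := \sum_i `|x i| in
  if S == 0 then 0 else S * psi (\row_i (`|x i| / S)).

(* a continuous linear functional on X^n, given as (f_1,...,f_n) with f_i in X^*,
   acting by x |-> sum_i f_i(x_i) *)
Definition cont_lin_family (X : normedModType R) (n : nat) (f : 'I_n -> X -> R)
  : Prop :=
  forall i, (forall (a : R) (x y : X), f i (a *: x + y) = a * f i x + f i y)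
            /\ continuous (f i).

Definition dualnorm (X : normedModType R) (n : nat) (psi : 'rV[R]_n -> R)
  (f : 'I_n -> X -> R) : R :=
  sup [set `|\sum_i f i (x i)| | x in [set x : 'I_n -> X | psinorm psi x <= 1]].

End Defs.
Arguments Omega {R} n t.
Arguments Omega_int {R} n t.

From HB Require Import structures.
From mathcomp Require Import all_boot all_order all_algebra.
From mathcomp Require Import all_classical all_reals all_analysis.
From mathcomp Require Import ring lra.
Import Order.TTheory GRing.Theory Num.Theory.
Import numFieldNormedType.Exports.
Local Open Scope classical_set_scope.
Local Open Scope ring_scope.
Set Implicit Arguments. Unset Strict Implicit. Unset Printing Implicit Defensive.

(* Extend psi positively homogeneously to the nonnegative cone.  Convexity makes
   the extension subadditive and (B2) says that zeroing a coordinate does not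
   increase it; together they make it monotone, so max_i t_i <= psi t <= 1 on
   Omega_n, and then also max_i s_i <= psi^* s <= 1.  All four ratios therefore
   lie in [1/n, n].

   The key fact is that, for c > 0, c phi <= psi holds iff c psi^* <= phi^*.
   One direction is immediate from the definition of the dual function.  For the
   other, a finite-dimensional Hahn-Banach argument applied to the sublinear
   functional x |-> psi(x^+) gives, for each t in Omega_n, some s in Omega_n with
   phi t * phi^* s <= <t, s>, while <t, s> <= psi t * psi^* s always holds.
   Taking c = m and c = 1 / M^* gives m M^* = 1 (and M m^* = 1 by symmetry), and
   c = 1 gives (vi) and (vii).  (iv) follows pointwise from m phi <= psi <= M phi,
   and (v) follows from (iv) by duality. *)

Section Simplex.
Variables (R : realType) (n : nat).
Implicit Types (x y t s : 'rV[R]_n) (c : R).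

Definition nonneg x := forall i, 0 <= x ord0 i.
Definition ssum x := \sum_i x ord0 i.

Definition simplex_bounded (F : 'rV[R]_n -> R) :=
  forall t, Omega n t -> 1 / n%:R <= F t /\ F t <= 1.

Lemma nonnegD x y : nonneg x -> nonneg y -> nonneg (x + y).
Proof. by move=> x0 y0 i; rewrite mxE addr_ge0. Qed.

Lemma nonnegZ c x : 0 <= c -> nonneg x -> nonneg (c *: x).
Proof. by move=> c0 x0 i; rewrite mxE mulr_ge0. Qed.

Lemma ssum_ge0 x : nonneg x -> 0 <= ssum x.
Proof. by move=> x0; apply: sumr_ge0 => i _; apply: x0. Qed.

Lemma nonneg_ssum_eq0 x : nonneg x -> ssum x = 0 -> x = 0.
Proof.
move=> x0 sx0; apply/rowP => j; rewrite mxE.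
exact: (psumr_eq0P (fun i _ => x0 i) sx0).
Qed.

Lemma ssumD x y : ssum (x + y) = ssum x + ssum y.
Proof. by rewrite /ssum -big_split; apply: eq_bigr => i _; rewrite mxE. Qed.

Lemma ssumZ c x : ssum (c *: x) = c * ssum x.
Proof. by rewrite /ssum mulr_sumr; apply: eq_bigr => i _; rewrite mxE. Qed.

Lemma Omega_nonneg t : Omega n t -> nonneg t.
Proof. exact: proj1. Qed.

Lemma Omega_ssum t : Omega n t -> ssum t = 1.
Proof. exact: proj2. Qed.

Lemma Omega_gt0 t : Omega n t -> (0 < n)%N.
Proof. by case: n t => // t [_]; rewrite big_ord0 => /esym/eqP; rewrite oner_eq0. Qed.

Lemma Omega_normalize x : nonneg x -> ssum x != 0 -> Omega n ((ssum x)^-1 *: x).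
Proof.
move=> x0 sx0; split; last by rewrite -[LHS]/(ssum _) ssumZ mulVf.
by apply: (nonnegZ _ x0); rewrite invr_ge0 ssum_ge0.
Qed.

Lemma Omega_le1 t i : Omega n t -> t ord0 i <= 1.
Proof.
move=> [t0 <-]; rewrite (bigD1 i) //= lerDl.
by apply: sumr_ge0 => j _; apply: t0.
Qed.

Lemma Omega_unitv i : Omega n (unitv R i).
Proof.
split=> [j|]; first by rewrite mxE ler0n.
rewrite (bigD1 i) //= big1 ?mxE ?eqxx ?addr0 // => j ji.
by rewrite mxE (negbTE ji).
Qed.

Lemma Omega_eq_unitv t i : Omega n t -> t ord0 i = 1 -> t = unitv R i.
Proof.
move=> [t0 t1] ti1; apply/rowP => j; rewrite !mxE.
have rest0 : \sum_(j | j != i) t ord0 j = 0.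
  by move: t1; rewrite (bigD1 i) //= ti1; lra.
case: eqP => [->|/eqP ji]; first exact: ti1.
exact: (psumr_eq0P (fun j _ => t0 j) rest0).
Qed.

Lemma inv_le_of_coord_le t c : Omega n t -> (forall i, t ord0 i <= c) -> 1 / n%:R <= c.
Proof.
move=> tO tc; rewrite ler_pdivrMr ?ltr0n ?(Omega_gt0 tO) //.
rewrite -{1}(Omega_ssum tO); apply: le_trans (ler_sum _ (fun i _ => tc i)) _.
by rewrite sumr_const card_ord mulr_natr.
Qed.

Lemma simplex_bounded_gt0 F t : simplex_bounded F -> Omega n t -> 0 < F t.
Proof.
move=> Fb tO; apply: lt_le_trans (proj1 (Fb t tO)).
by rewrite divr_gt0 ?ltr0n ?(Omega_gt0 tO).
Qed.

Lemma row_unitv_sum x : x = \sum_i x ord0 i *: unitv R i.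
Proof.
apply/rowP => j; rewrite summxE (bigD1 j) //= !mxE eqxx mulr1 big1 ?addr0 //.
by move=> i ij; rewrite !mxE eq_sym (negbTE ij) mulr0.
Qed.

Lemma dotv_unitv i s : dotv (unitv R i) s = s ord0 i.
Proof.
rewrite /dotv (bigD1 i) //= mxE eqxx mul1r big1 ?addr0 // => j ji.
by rewrite mxE (negbTE ji) mul0r.
Qed.

Lemma dotvZ t c s : dotv t (c *: s) = c * dotv t s.
Proof. by rewrite /dotv mulr_sumr; apply: eq_bigr => i _; rewrite mxE mulrCA. Qed.

Lemma dotvNl t s : dotv (- t) s = - dotv t s.
Proof. by rewrite /dotv -sumrN; apply: eq_bigr => i _; rewrite mxE mulNr. Qed.

Definition set_at x i c := \row_j (if j == i then c else x ord0 j).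

Lemma nonneg_set_at x i c : nonneg x -> 0 <= c -> nonneg (set_at x i c).
Proof. by move=> x0 c0 j; rewrite mxE; case: eqP. Qed.

Lemma set_atZ c x i u : set_at (c *: x) i (c * u) = c *: set_at x i u.
Proof. by apply/rowP => j; rewrite !mxE; case: eqP. Qed.

Lemma Omega_drop_coord t i : Omega n t -> t ord0 i < 1 -> Omega n (drop_coord t i).
Proof.
move=> [t0 t1] ti1; have ti_neq1 : 1 - t ord0 i != 0 by rewrite subr_eq0 gt_eqF.
split=> [j|].
  by rewrite mxE; case: eqP => // _; rewrite divr_ge0 // subr_ge0 ltW.
rewrite (bigD1 i) //= mxE eqxx add0r.
rewrite (eq_bigr (fun j => t ord0 j / (1 - t ord0 i))); last first.
  by move=> j /negbTE ji; rewrite mxE ji.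
rewrite -mulr_suml (_ : \sum_(j | j != i) t ord0 j = 1 - t ord0 i) ?mulfV //.
by move: t1; rewrite (bigD1 i) //=; lra.
Qed.

Lemma set_at0_drop_coord t i : t ord0 i != 1 ->
  set_at t i 0 = (1 - t ord0 i) *: drop_coord t i.
Proof.
rewrite -subr_eq0 -oppr_eq0 opprB => ti1.
apply/rowP => j; rewrite !mxE; case: eqP => _; first by rewrite mulr0.
by rewrite mulrC divfK.
Qed.

End Simplex.

Lemma PsiClass_unitv (R : realType) (n : nat) (psi : 'rV[R]_n -> R) :
  PsiClass psi -> forall i, psi (unitv R i) = 1.
Proof. by case=> _ [_ []]. Qed.

Section HomogeneousExtension.
Variables (R : realType) (n : nat) (psi : 'rV[R]_n -> R).
Hypothesis psiP : PsiClass psi.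
Implicit Types (x y t : 'rV[R]_n) (c : R).

Let psi_convex := proj1 psiP.
Let psi_unitv := PsiClass_unitv psiP.
Let psi_B2 := proj2 (proj2 (proj2 psiP)).

Definition homext x := if ssum x == 0 then 0 else ssum x * psi ((ssum x)^-1 *: x).

Lemma homext_Omega t : Omega n t -> homext t = psi t.
Proof. by move=> tO; rewrite /homext Omega_ssum // oner_eq0 invr1 scale1r mul1r. Qed.

Lemma homext0 : homext 0 = 0.
Proof. by rewrite /homext /ssum big1 ?eqxx // => i _; rewrite mxE. Qed.

Lemma homext_unitv i : homext (unitv R i) = 1.
Proof. by rewrite homext_Omega; [apply: psi_unitv | apply: Omega_unitv]. Qed.

Lemma homextZ c x : 0 <= c -> homext (c *: x) = c * homext x.
Proof.
move=> c0; rewrite /homext ssumZ.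
have [->|cn0] := eqVneq c 0; first by rewrite !mul0r eqxx.
rewrite mulf_eq0 (negbTE cn0) /=; case: eqP => [_|/eqP sx0]; first by rewrite mulr0.
by rewrite scalerA invfM [_ * c]mulrAC mulVf // mul1r mulrA.
Qed.

Lemma homextD x y : nonneg x -> nonneg y -> homext (x + y) <= homext x + homext y.
Proof.
move=> x0 y0.
have [/(nonneg_ssum_eq0 x0)->|sx0] := eqVneq (ssum x) 0.
  by rewrite add0r homext0 add0r.
have [/(nonneg_ssum_eq0 y0)->|sy0] := eqVneq (ssum y) 0.
  by rewrite addr0 homext0 addr0.
have uO := Omega_normalize x0 sx0; have vO := Omega_normalize y0 sy0.
have a_gt0 : 0 < ssum x by rewrite lt_def sx0 ssum_ge0.
have b_gt0 : 0 < ssum y by rewrite lt_def sy0 ssum_ge0.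
have ab_gt0 := addr_gt0 a_gt0 b_gt0.
rewrite /homext ssumD gt_eqF // (negbTE sx0) (negbTE sy0).
move: a_gt0 b_gt0 ab_gt0 uO vO; set a := ssum x; set b := ssum y.
set u := a^-1 *: x; set v := b^-1 *: y => a_gt0 b_gt0 ab_gt0 uO vO.
have l01 : 0 <= a / (a + b) <= 1.
  by rewrite divr_ge0 ?(ltW a_gt0) ?(ltW ab_gt0) //= ler_pdivrMr // mul1r lerDl ltW.
have -> : (a + b)^-1 *: (x + y) = (a / (a + b)) *: u + (1 - a / (a + b)) *: v.
  by apply/rowP => j; rewrite /u /v !mxE; field; rewrite !gt_eqF.
apply: le_trans (ler_wpM2l (ltW ab_gt0) (psi_convex uO vO l01)) _.
by rewrite le_eqVlt; apply/predU1P; left; field; rewrite gt_eqF.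
Qed.

Lemma homext_Omega_set0 t i : Omega n t -> homext (set_at t i 0) <= psi t.
Proof.
move=> tO; case: (boolP [exists j, t ord0 j == 1]) => [/existsP[j /eqP tj1]|no1].
  rewrite (Omega_eq_unitv tO tj1) psi_unitv.
  have [<-|ji] := eqVneq j i.
    have -> : set_at (unitv R j) j 0 = 0 by apply/rowP => k; rewrite !mxE; case: eqP.
    by rewrite homext0 ler01.
  rewrite (_ : set_at (unitv R j) i 0 = unitv R j) ?homext_unitv //.
  by apply/rowP => k; rewrite !mxE; case: eqP => // ->; rewrite eq_sym (negbTE ji).
have t_lt1 k : t ord0 k < 1.
  rewrite lt_neqAle Omega_le1 // andbT; apply: contraNneq no1 => tk1.
  by apply/existsP; exists k; rewrite tk1.
rewrite set_at0_drop_coord ?lt_eqF // homextZ; last by rewrite subr_ge0 ltW.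
rewrite homext_Omega; last exact: Omega_drop_coord.
by apply: psi_B2; split.
Qed.

Lemma homext_set0 x i : nonneg x -> homext (set_at x i 0) <= homext x.
Proof.
move=> x0; have [/(nonneg_ssum_eq0 x0)->|sx0] := eqVneq (ssum x) 0.
  by rewrite (_ : set_at 0 i 0 = 0) //; apply/rowP => j; rewrite !mxE; case: eqP.
have u_Omega := Omega_normalize x0 sx0.
have x_eq : x = ssum x *: ((ssum x)^-1 *: x) by rewrite scalerA mulfV ?scale1r.
have -> : set_at x i 0 = ssum x *: set_at ((ssum x)^-1 *: x) i 0.
  by rewrite -set_atZ mulr0 -x_eq.
rewrite [X in _ <= homext X]x_eq !(homextZ _ (ssum_ge0 x0)).
by apply: ler_wpM2l; rewrite ?ssum_ge0 // (homext_Omega u_Omega) homext_Omega_set0.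
Qed.

Lemma homext_set x i u : nonneg x -> 0 <= u <= x ord0 i ->
  homext (set_at x i u) <= homext x.
Proof.
move=> x0 /andP[u0 ux].
have [xi0|xi_neq0] := eqVneq (x ord0 i) 0.
  rewrite (_ : set_at x i u = x) //; apply/rowP => j; rewrite !mxE.
  by case: eqP => // ->; apply/eqP; rewrite xi0 eq_le u0 -xi0 ux.
have xi_gt0 : 0 < x ord0 i by rewrite lt_def xi_neq0 x0.
set l := u / x ord0 i.
have l0 : 0 <= l by rewrite divr_ge0.
have l1 : 0 <= 1 - l by rewrite subr_ge0 ler_pdivrMr // mul1r.
have -> : set_at x i u = l *: x + (1 - l) *: set_at x i 0.
  apply/rowP => j; rewrite !mxE; case: eqP => [->|_]; last by ring.
  by rewrite /l mulr0 addr0 mulfVK.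
apply: le_trans (homextD (nonnegZ l0 x0) (nonnegZ l1 (nonneg_set_at i x0 (lexx 0)))) _.
rewrite !homextZ //; apply: le_trans (lerD (lexx _) (ler_wpM2l l1 (homext_set0 i x0))) _.
by rewrite -mulrDl addrC subrK mul1r.
Qed.

Lemma homext_mono x y : nonneg y -> (forall i, y ord0 i <= x ord0 i) ->
  homext y <= homext x.
Proof.
move=> y0 yx; pose w k := \row_(j < n) if (j < k)%N then y ord0 j else x ord0 j.
suff w_le k : homext (w k) <= homext x.
  by rewrite (_ : y = w n) ?w_le //; apply/rowP => j; rewrite mxE ltn_ord.
elim: k => [|k IH]; first by rewrite (_ : w 0%N = x) //; apply/rowP => j; rewrite mxE.
have w0 : nonneg (w k).
  by move=> j; rewrite mxE; case: ifP => _; last apply: le_trans (yx j).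
have [kn|nk] := ltnP k n; last first.
  rewrite (_ : w k.+1 = w k) //; apply/rowP => j; rewrite !mxE.
  by rewrite !(leq_trans (ltn_ord j)) ?(leqW nk).
apply: le_trans IH; rewrite (_ : w k.+1 = set_at (w k) (Ordinal kn) (y ord0 (Ordinal kn))).
  by apply: homext_set; rewrite // y0 mxE ltnn yx.
apply/rowP => j; rewrite !mxE ltnS leq_eqVlt.
have [->|jk] := eqVneq j (Ordinal kn); first by rewrite !eqxx.
by move: jk; rewrite -val_eqE /= => /negbTE ->.
Qed.

Lemma coord_le_homext x i : nonneg x -> x ord0 i <= homext x.
Proof.
move=> x0; rewrite -[leLHS]mulr1 -(homext_unitv i) -homextZ //.
apply: homext_mono => [|j]; first exact/nonnegZ/Omega_nonneg/Omega_unitv.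
by rewrite !mxE; case: eqP => [->|_]; rewrite ?mulr1 ?mulr0.
Qed.

Lemma homext_le_ssum x : nonneg x -> homext x <= ssum x.
Proof.
move=> x0; rewrite {1}(row_unitv_sum x) /ssum.
suff [] : nonneg (\sum_i x ord0 i *: unitv R i) /\
          homext (\sum_i x ord0 i *: unitv R i) <= \sum_i x ord0 i by [].
apply: (big_ind2 (fun v r => nonneg v /\ homext v <= r)).
- by split=> [j|]; rewrite ?homext0 // mxE.
- move=> v1 r1 v2 r2 [v1_0 h1] [v2_0 h2]; split; first exact: nonnegD.
  exact: le_trans (homextD v1_0 v2_0) (lerD h1 h2).
- move=> i _; split; first exact/nonnegZ/Omega_nonneg/Omega_unitv.
  by rewrite homextZ // homext_unitv mulr1.
Qed.

Lemma psi_ge_coord t i : Omega n t -> t ord0 i <= psi t.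
Proof. by move=> tO; rewrite -homext_Omega //; apply/coord_le_homext/Omega_nonneg. Qed.

Lemma PsiClass_bounded : simplex_bounded psi.
Proof.
move=> t tO; split; first by apply: (inv_le_of_coord_le tO) => i; apply: psi_ge_coord.
by rewrite -homext_Omega // -(Omega_ssum tO); apply/homext_le_ssum/Omega_nonneg.
Qed.

End HomogeneousExtension.

Lemma inf_range_affine (R : realType) (f g h h' : R -> R) a k : 0 < a ->
  has_lbound (range g) -> (forall l, f l = a * g (h l) + k) -> cancel h' h ->
  inf (range f) = a * inf (range g) + k.
Proof.
move=> a_gt0 g_lb fE hK.
have g_ne : range g !=set0 by exists (g 0), 0.
have f_ne : range f !=set0 by exists (f 0), 0.
have f_lb : lbound (range f) (a * inf (range g) + k).
  by move=> _ [l _ <-]; rewrite fE lerD2r ler_pM2l // ge_inf //; exists (h l).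
apply/eqP; rewrite eq_le lb_le_inf // andbT.
rewrite -lerBlDr -ler_pdivrMl //; apply: lb_le_inf => // _ [l _ <-].
rewrite ler_pdivrMl // lerBlDr -(hK l) -fE.
by apply: ge_inf; [exists (a * inf (range g) + k) | exists (h' l)].
Qed.

Section HahnBanachStep.
Variables (R : realType) (V : lmodType R).
Implicit Types (q : V -> R) (x y u w : V) (c d : R).

Definition sublinear q :=
  (forall x y, q (x + y) <= q x + q y) /\ (forall c x, 0 <= c -> q (c *: x) = c * q x).

Definition linear_along q u c := forall x mu, q (x + mu *: u) = q x + mu * c.

(* The one-dimensional Hahn-Banach step: when [- q (- u) <= c <= q u], this is a
   sublinear minorant of [q] that is linear with slope [c] along [u]. *)
Definition reduce_along q u c x := inf (range (fun l : R => q (x + l *: u) - l * c)).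

Lemma sublinear0 q : sublinear q -> q 0 = 0.
Proof. by case=> _ qZ; rewrite -(scale0r 0) qZ ?lexx // mul0r. Qed.

Lemma sublinear_opp q u : sublinear q -> - q (- u) <= q u.
Proof.
by move=> qP; have := proj1 qP u (- u); rewrite subrr sublinear0 //; lra.
Qed.

Lemma linear_along_slope q u c : sublinear q -> linear_along q u c -> c = q u.
Proof. by move=> qP /(_ 0 1); rewrite add0r scale1r sublinear0 // add0r mul1r. Qed.

Section Reduce.
Variables (q : V -> R) (u : V) (c : R).
Hypotheses (qP : sublinear q) (c_ge : - q (- u) <= c) (c_le : c <= q u).

Lemma reduce_along_lb x : lbound (range (fun l : R => q (x + l *: u) - l * c)) (- q (- x)).
Proof.
move=> _ [l _ <-].
have qxl : q (l *: u) <= q (x + l *: u) + q (- x).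
  by rewrite -{1}(addKr x (l *: u)) addrC; apply: (proj1 qP).
suff : l * c <= q (l *: u) by lra.
have [l_ge0|l_lt0] := leP 0 l; first by rewrite (proj2 qP) //; apply: ler_wpM2l.
have nl_ge0 : 0 <= - l by rewrite oppr_ge0 ltW.
rewrite -[l]opprK scaleNr -scalerN (proj2 qP) // mulNr -mulrN.
by apply: ler_wpM2l; rewrite // lerNl.
Qed.

Let has_lb x : has_lbound (range (fun l : R => q (x + l *: u) - l * c)).
Proof. by exists (- q (- x)); apply: reduce_along_lb. Qed.

Lemma reduce_along_le x : reduce_along q u c x <= q x.
Proof.
apply: (ge_inf (has_lb x)).
by exists 0; rewrite // scale0r addr0 mul0r subr0.
Qed.

Lemma reduce_along_linear : linear_along (reduce_along q u c) u c.
Proof.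
move=> x mu; rewrite /reduce_along.
rewrite (inf_range_affine (h := fun l => mu + l) (h' := fun l => l - mu) (k := mu * c)
  ltr01 (has_lb x)) ?mul1r //.
- by move=> l; rewrite -addrA -scalerDl mul1r mulrDl; lra.
- by move=> l; rewrite addrC subrK.
Qed.

Lemma reduce_along_linear_along w d : linear_along q w d -> linear_along (reduce_along q u c) w d.
Proof.
move=> qw x mu; rewrite /reduce_along.
rewrite (inf_range_affine (h := id) (h' := id) (k := mu * d) ltr01 (has_lb x)) ?mul1r //.
by move=> l; rewrite addrAC qw mul1r; lra.
Qed.

Lemma reduce_along_sublinear : sublinear (reduce_along q u c).
Proof.
split=> [x y|a x a_ge0].
  rewrite -lerBlDr; apply: lb_le_inf; first by exists (q (x + 0 *: u) - 0 * c), 0.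
  move=> _ [l1 _ <-]; rewrite lerBlDr -lerBlDl.
  apply: lb_le_inf; first by exists (q (y + 0 *: u) - 0 * c), 0.
  move=> _ [l2 _ <-]; rewrite lerBlDr.
  apply: le_trans (_ : q (x + y + (l1 + l2) *: u) - (l1 + l2) * c <= _).
    by apply: (ge_inf (has_lb _)); exists (l1 + l2).
  have := proj1 qP (x + l1 *: u) (y + l2 *: u).
  rewrite addrACA -scalerDl; lra.
have [->|a_neq0] := eqVneq a 0.
  rewrite scale0r mul0r; apply/eqP; rewrite eq_le; apply/andP; split.
    by rewrite -(sublinear0 qP); apply: reduce_along_le.
  apply: lb_le_inf; first by exists (q (0 + 0 *: u) - 0 * c), 0.
  by move=> v /reduce_along_lb; rewrite oppr0 sublinear0 // oppr0.
have a_gt0 : 0 < a by rewrite lt_def a_neq0.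
rewrite /reduce_along.
rewrite (inf_range_affine (h := fun l => l / a) (h' := fun l => a * l) (k := 0)
  a_gt0 (has_lb x)) ?addr0 //.
- have al l : a * (l / a) = l by rewrite mulrCA mulfV ?mulr1.
  move=> l; rewrite addr0 mulrBr -(proj2 qP _ _ (ltW a_gt0)).
  by rewrite scalerDr scalerA al mulrA al.
- by move=> l; rewrite /= mulrC mulKf.
Qed.

End Reduce.
End HahnBanachStep.

Section FiniteHahnBanach.
Variables (R : realType) (n : nat).
Implicit Types (q : 'rV[R]_n -> R) (x : 'rV[R]_n).

Lemma sublinear_minorant_linear_upto k q : (k <= n)%N -> sublinear q -> exists2 Q, sublinear Q &
  [/\ (forall x, Q x <= q x),
      (forall w d, linear_along q w d -> linear_along Q w d) &
      (forall i : 'I_n, (i < k)%N -> linear_along Q (unitv R i) (Q (unitv R i)))].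
Proof.
elim: k q => [|k IH] q kn qP; first by exists q.
have [Q QP [Qq Qpres Qlin]] := IH q (ltnW kn) qP.
set e := unitv R (Ordinal kn).
have Q_opp := sublinear_opp e QP.
have Q'P := reduce_along_sublinear QP Q_opp (lexx _).
exists (reduce_along Q e (Q e)) => //; split.
- by move=> x; apply: le_trans (reduce_along_le QP Q_opp (lexx _) x) (Qq x).
- by move=> w d /Qpres; apply: reduce_along_linear_along.
move=> i; rewrite ltnS leq_eqVlt => /orP[/eqP ik|ik].
  have -> : i = Ordinal kn by apply: val_inj.
  have e_lin := reduce_along_linear QP Q_opp (lexx _).
  by rewrite -(linear_along_slope Q'P e_lin).
have i_lin := reduce_along_linear_along QP Q_opp (lexx _) (Qlin i ik).
by rewrite -(linear_along_slope Q'P i_lin).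
Qed.

Lemma sublinear_unitv_dotv Q : sublinear Q ->
  (forall i, linear_along Q (unitv R i) (Q (unitv R i))) ->
  forall x, Q x = dotv x (\row_i Q (unitv R i)).
Proof.
move=> QP Qlin x; rewrite {1}(row_unitv_sum x) /dotv.
elim: (index_enum _) => [|i r IH]; first by rewrite !big_nil sublinear0.
by rewrite !big_cons addrC Qlin IH mxE addrC.
Qed.

Lemma hahn_banach q t0 : sublinear q ->
  exists a, (forall x, dotv x a <= q x) /\ dotv t0 a = q t0.
Proof.
move=> qP; have q_opp := sublinear_opp t0 qP.
have [Q QP [Qq Qpres Qlin]] :=
  sublinear_minorant_linear_upto (leqnn n) (reduce_along_sublinear qP q_opp (lexx _)).
have Qlin' i : linear_along Q (unitv R i) (Q (unitv R i)) := Qlin i (ltn_ord i).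
exists (\row_i Q (unitv R i)); split=> [x|]; rewrite -sublinear_unitv_dotv //.
  exact: le_trans (Qq x) (reduce_along_le qP q_opp (lexx _) x).
exact/esym/(linear_along_slope QP)/Qpres/(reduce_along_linear qP q_opp (lexx _)).
Qed.

End FiniteHahnBanach.

Section DualFunction.
Variables (R : realType) (n : nat) (psi : 'rV[R]_n -> R).
Hypothesis psiP : PsiClass psi.
Implicit Types (x t s : 'rV[R]_n) (c : R).

Let psi_gt0 t : Omega n t -> 0 < psi t := simplex_bounded_gt0 (PsiClass_bounded psiP).

Lemma dotv_le_psi t s : Omega n t -> Omega n s -> dotv t s <= psi t.
Proof.
move=> tO [s0 s1]; rewrite -[leRHS]mulr1 -s1 mulr_sumr.
by apply: ler_sum => i _; rewrite ler_wpM2r // psi_ge_coord.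
Qed.

Lemma dualfun_ge t s : Omega n t -> Omega n s -> dotv t s / psi t <= dualfun psi s.
Proof.
move=> tO sO; apply: ub_le_sup; last by exists t.
exists 1 => _ [t' t'O <-]; rewrite ler_pdivrMr ?psi_gt0 // mul1r.
exact: dotv_le_psi.
Qed.

Lemma dualfun_le s c : Omega n s -> (forall t, Omega n t -> dotv t s <= c * psi t) ->
  dualfun psi s <= c.
Proof.
move=> sO sc; apply: ge_sup; first by exists (dotv s s / psi s), s.
by move=> _ [t tO <-]; rewrite ler_pdivrMr ?psi_gt0 ?sc.
Qed.

Lemma dotv_le_mul_dualfun t s : Omega n t -> Omega n s -> dotv t s <= psi t * dualfun psi s.
Proof. by move=> tO sO; rewrite mulrC -ler_pdivrMr ?psi_gt0 ?dualfun_ge. Qed.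

Lemma dualfun_bounded : simplex_bounded (dualfun psi).
Proof.
move=> s sO; split.
  apply: (inv_le_of_coord_le sO) => i.
  have := dualfun_ge (Omega_unitv R i) sO.
  by rewrite dotv_unitv (PsiClass_unitv psiP) divr1.
by apply: dualfun_le => // t tO; rewrite mul1r dotv_le_psi.
Qed.

Definition pos_part x := \row_j Num.max (x ord0 j) 0.

Lemma pos_part_nonneg x : nonneg (pos_part x).
Proof. by move=> j; rewrite mxE le_max lexx orbT. Qed.

Lemma pos_part_id x : nonneg x -> pos_part x = x.
Proof. by move=> x0; apply/rowP => j; rewrite mxE; apply/max_idPl/x0. Qed.

Lemma homext_pos_part_sublinear : sublinear (homext psi \o pos_part).
Proof.
split=> [x y|c x c0] /=.
  apply: le_trans (homextD psiP (pos_part_nonneg x) (pos_part_nonneg y)).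
  apply: homext_mono => // [|j]; first exact: pos_part_nonneg.
  by rewrite !mxE ge_max addr_ge0 ?le_max ?lexx ?orbT // andbT lerD // le_max lexx.
rewrite -homextZ //; congr homext.
by apply/rowP => j; rewrite !mxE maxr_pMr // mulr0.
Qed.

Lemma dualfun_support t : Omega n t ->
  exists2 s, Omega n s & psi t * dualfun psi s <= dotv t s.
Proof.
move=> tO.
have [a [a_le a_t]] := hahn_banach t homext_pos_part_sublinear.
have homext_pos_Omega u : Omega n u -> (homext psi \o pos_part) u = psi u.
  by move=> uO; rewrite /= pos_part_id ?homext_Omega //; apply: Omega_nonneg.
rewrite homext_pos_Omega // in a_t.
have a0 : nonneg a.
  move=> i; have := a_le (- unitv R i).
  rewrite /= (_ : pos_part _ = 0) ?homext0; last first.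
    by apply/rowP => j; rewrite !mxE; apply/max_idPr; rewrite oppr_le0 ler0n.
  by rewrite dotvNl dotv_unitv oppr_le0.
have A_ge : psi t <= ssum a.
  rewrite -a_t; apply: ler_sum => i _.
  by rewrite ler_piMl // Omega_le1.
have A_gt0 : 0 < ssum a by apply: lt_le_trans A_ge; apply: psi_gt0.
have sO := Omega_normalize a0 (lt0r_neq0 A_gt0).
exists ((ssum a)^-1 *: a) => //.
have -> : dotv t ((ssum a)^-1 *: a) = psi t / ssum a by rewrite dotvZ a_t mulrC.
apply: ler_wpM2l; first exact/ltW/psi_gt0.
apply: dualfun_le => // u uO; rewrite dotvZ.
apply: ler_wpM2l; first by rewrite invr_ge0 ltW.
by have := a_le u; rewrite homext_pos_Omega.
Qed.

End DualFunction.

Section DualComparison.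
Variables (R : realType) (n : nat) (psi phi : 'rV[R]_n -> R).
Hypotheses (psiP : PsiClass psi) (phiP : PsiClass phi).

Lemma dualfun_le_scaled c : 0 < c ->
  (forall t, Omega n t -> c * phi t <= psi t) <->
  (forall s, Omega n s -> c * dualfun psi s <= dualfun phi s).
Proof.
move=> c_gt0; split=> [le_t s sO|le_s t tO].
  rewrite mulrC -ler_pdivlMr //; apply: (dualfun_le psiP) => // t tO.
  apply: le_trans (dotv_le_mul_dualfun phiP tO sO) _.
  rewrite mulrAC ler_pdivlMr // mulrC mulrA [leRHS]mulrC.
  apply: ler_wpM2r (le_t t tO).
  exact/ltW/(simplex_bounded_gt0 (dualfun_bounded phiP) sO).
have [s sO le_dot] := dualfun_support phiP tO.
have psi_s_gt0 := simplex_bounded_gt0 (dualfun_bounded psiP) sO.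
rewrite -(ler_pM2r psi_s_gt0); apply: le_trans (dotv_le_mul_dualfun psiP tO sO).
apply: le_trans le_dot; rewrite mulrAC mulrC; apply: ler_wpM2l (le_s s sO).
exact/ltW/(simplex_bounded_gt0 (PsiClass_bounded phiP) tO).
Qed.

Lemma dualfun_antitone_iff : (forall t, Omega n t -> phi t <= psi t) <->
  (forall s, Omega n s -> dualfun psi s <= dualfun phi s).
Proof.
have [le_dual le_primal] := dualfun_le_scaled ltr01.
split=> [le_t s sO|le_s t tO]; rewrite -[leLHS]mul1r.
  by apply: le_dual => // t tO; rewrite mul1r le_t.
by apply: le_primal => // s sO; rewrite mul1r le_s.
Qed.

End DualComparison.

Section Ratio.
Variables (R : realType) (n : nat) (F G : 'rV[R]_n -> R).
Hypotheses (n_gt0 : (0 < n)%N) (FB : simplex_bounded F) (GB : simplex_bounded G).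

Let G_gt0 t : Omega n t -> 0 < G t := simplex_bounded_gt0 GB.
Let e0 := unitv R (Ordinal n_gt0).
Let e0_Omega : Omega n e0 := Omega_unitv R (Ordinal n_gt0).

Let ratios_ne : [set F t / G t | t in Omega n] !=set0.
Proof. by exists (F e0 / G e0), e0. Qed.

Lemma ratio_min_ge c : (forall t, Omega n t -> c * G t <= F t) -> c <= ratio_min F G.
Proof.
move=> cGF; apply: lb_le_inf ratios_ne _ => _ [t tO <-].
by rewrite ler_pdivlMr ?G_gt0 ?cGF.
Qed.

Lemma ratio_max_le c : (forall t, Omega n t -> F t <= c * G t) -> ratio_max F G <= c.
Proof.
move=> FcG; apply: ge_sup ratios_ne _ => _ [t tO <-].
by rewrite ler_pdivrMr ?G_gt0 ?FcG.
Qed.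

Lemma ratio_ge_inv t : Omega n t -> 1 / n%:R * G t <= F t.
Proof.
move=> tO; have [F_ge _] := FB tO; have [_ G_le1] := GB tO.
by apply: le_trans F_ge; rewrite ger_pMr ?divr_gt0 ?ltr0n.
Qed.

Lemma ratio_le_n t : Omega n t -> F t <= n%:R * G t.
Proof.
move=> tO; have [_ F_le1] := FB tO; have [G_ge _] := GB tO.
by apply: le_trans F_le1 _; rewrite -ler_pdivrMl ?ltr0n // mulr1 -div1r.
Qed.

Lemma ratio_min_le t : Omega n t -> ratio_min F G <= F t / G t.
Proof.
move=> tO; apply: ge_inf; last by exists t.
by exists (1 / n%:R) => _ [u uO <-]; rewrite ler_pdivlMr ?G_gt0 ?ratio_ge_inv.
Qed.

Lemma ratio_max_ge t : Omega n t -> F t / G t <= ratio_max F G.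
Proof.
move=> tO; apply: ub_le_sup; last by exists t.
by exists n%:R => _ [u uO <-]; rewrite ler_pdivrMr ?G_gt0 ?ratio_le_n.
Qed.

Lemma ratio_min_mul_le t : Omega n t -> ratio_min F G * G t <= F t.
Proof. by move=> tO; rewrite -ler_pdivlMr ?G_gt0 ?ratio_min_le. Qed.

Lemma ratio_max_mul_ge t : Omega n t -> F t <= ratio_max F G * G t.
Proof. by move=> tO; rewrite -ler_pdivrMr ?G_gt0 ?ratio_max_ge. Qed.

Lemma ratio_bounds : 1 / n%:R <= ratio_min F G /\
  (forall t, Omega n t -> ratio_min F G <= F t / G t /\ F t / G t <= ratio_max F G) /\
  ratio_max F G <= n%:R.
Proof.
split; first exact/ratio_min_ge/ratio_ge_inv.
split; last exact/ratio_max_le/ratio_le_n.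
by move=> t tO; rewrite ratio_min_le ?ratio_max_ge.
Qed.

Lemma ratio_min_gt0 : 0 < ratio_min F G.
Proof. by apply: lt_le_trans (proj1 ratio_bounds); rewrite divr_gt0 ?ltr0n. Qed.

Lemma ratio_max_gt0 : 0 < ratio_max F G.
Proof.
apply: lt_le_trans ratio_min_gt0 _.
exact: le_trans (ratio_min_le e0_Omega) (ratio_max_ge e0_Omega).
Qed.

End Ratio.

Lemma ratio_min_mul_ratio_max (R : realType) (n : nat) (F G F' G' : 'rV[R]_n -> R) :
  (0 < n)%N -> simplex_bounded F -> simplex_bounded G ->
  simplex_bounded F' -> simplex_bounded G' ->
  (forall c, 0 < c -> (forall t, Omega n t -> c * G t <= F t) <->
                      (forall s, Omega n s -> c * F' s <= G' s)) ->
  ratio_min F G * ratio_max F' G' = 1.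
Proof.
move=> n_gt0 FB GB F'B G'B scaled_le.
have m_gt0 := ratio_min_gt0 n_gt0 FB GB; have M_gt0 := ratio_max_gt0 n_gt0 F'B G'B.
apply/eqP; rewrite eq_le; apply/andP; split.
  rewrite mulrC -ler_pdivlMr // div1r; apply: ratio_max_le => // s sO.
  rewrite ler_pdivlMl //; apply: (scaled_le _ m_gt0).1 => // t.
  exact: ratio_min_mul_le.
rewrite -ler_pdivrMr // div1r; apply: ratio_min_ge => // t tO.
have iM_gt0 : 0 < (ratio_max F' G')^-1 by rewrite invr_gt0.
apply: (scaled_le _ iM_gt0).2 => // s sO.
by rewrite ler_pdivrMl // ratio_max_mul_ge.
Qed.

Lemma linear_continuous_bounded (R : realType) (X : normedModType R) (g : X -> R) :
  (forall (a : R) x y, g (a *: x + y) = a * g x + g y) -> continuous g ->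
  exists2 C, 0 <= C & forall y, `|g y| <= C * `|y|.
Proof.
move=> g_lin g_cont.
pose h : {linear X -> R^o} := HB.pack (g : X -> R^o) (GRing.isLinear.Build _ _ _ _ g g_lin).
have /linear_boundedP [C [_ hC]] := continuous_linear_bounded 0 (g_cont 0 : {for 0, continuous h}).
have C_lt : C < `|C| + 1 by rewrite (le_lt_trans (ler_norm C)) ?ltrDl.
by exists (`|C| + 1) => [|y]; [rewrite addr_ge0 | exact: hC].
Qed.

Section PsiNorm.
Variables (R : realType) (n : nat) (X : normedModType R).
Implicit Types (psi phi : 'rV[R]_n -> R) (x : 'I_n -> X) (f : 'I_n -> X -> R).

Definition normsum x := \sum_i `|x i|.

Lemma Omega_normsum x : normsum x != 0 -> Omega n (\row_i (`|x i| / normsum x)).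
Proof.
move=> x_neq0; split=> [i|]; first by rewrite mxE divr_ge0 ?sumr_ge0.
rewrite (eq_bigr (fun i => `|x i| / normsum x)) => [|i _]; last by rewrite mxE.
by rewrite -mulr_suml mulfV.
Qed.

Lemma psinorm_le psi phi x : (forall t, Omega n t -> psi t <= phi t) ->
  psinorm psi x <= psinorm phi x.
Proof.
move=> psi_le; rewrite /psinorm /= -/(normsum x).
case: eqP => [//|/eqP x_neq0]; apply: ler_wpM2l; first exact: sumr_ge0.
exact/psi_le/Omega_normsum.
Qed.

Lemma psinormMl psi c x : psinorm (fun t => c * psi t) x = c * psinorm psi x.
Proof. by rewrite /psinorm /=; case: eqP; rewrite ?mulr0 // mulrCA. Qed.

Lemma psinormZ psi c x : 0 < c -> psinorm psi (fun i => c *: x i) = c * psinorm psi x.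
Proof.
move=> c_gt0; have normsumZ : normsum (fun i => c *: x i) = c * normsum x.
  by rewrite /normsum mulr_sumr; apply: eq_bigr => i _; rewrite normrZ gtr0_norm.
rewrite /psinorm /= -!/(normsum _) normsumZ mulf_eq0 gt_eqF //=.
case: eqP => [_|/eqP x_neq0]; first by rewrite mulr0.
rewrite -mulrA; congr (_ * (_ * psi _)); apply/rowP => j.
by rewrite !mxE normrZ gtr0_norm // invfM mulrACA mulfV ?mul1r // gt_eqF.
Qed.

Lemma norm_le_psinorm psi x i : PsiClass psi -> `|x i| <= psinorm psi x.
Proof.
move=> psiP; rewrite /psinorm /= -/(normsum x).
have xi_le : `|x i| <= normsum x by rewrite /normsum (bigD1 i) //= lerDl sumr_ge0.
case: eqP => [<- //|/eqP x_neq0].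
have := psi_ge_coord psiP i (Omega_normsum x_neq0).
by rewrite mxE ler_pdivrMr ?lt_def ?x_neq0 ?sumr_ge0 // mulrC.
Qed.

Lemma cont_lin_familyZ f : cont_lin_family f -> forall i a y, f i (a *: y) = a * f i y.
Proof.
move=> f_cl i a y; have f_lin := (f_cl i).1.
have f0 : f i 0 = 0 by have := f_lin 1 0 0; rewrite scaler0 addr0 mul1r; lra.
by have := f_lin a y 0; rewrite f0 !addr0 => ->.
Qed.

Lemma dualnorm_has_ub psi f : PsiClass psi -> cont_lin_family f ->
  has_ubound [set `|\sum_i f i (x i)| | x in [set x | psinorm psi x <= 1]].
Proof.
move=> psiP f_cl.
have /choice[C fC] i : exists C, 0 <= C /\ forall y, `|f i y| <= C * `|y|.
  by have [C ? ?] := linear_continuous_bounded (f_cl i).1 (f_cl i).2; exists C.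
exists (\sum_i C i) => _ [x x_le1 <-]; apply: le_trans (ler_norm_sum _ _ _) _.
apply: ler_sum => i _; have [C_ge0 fiC] := fC i; apply: le_trans (fiC (x i)) _.
by rewrite -[leRHS]mulr1 ler_wpM2l // (le_trans (norm_le_psinorm x i psiP)).
Qed.

Lemma dualnorm_le_scaled psi phi c f : PsiClass psi -> cont_lin_family f -> 0 < c ->
  (forall x, psinorm psi x <= c * psinorm phi x) -> dualnorm phi f <= c * dualnorm psi f.
Proof.
move=> psiP f_cl c_gt0 psi_le; apply: ge_sup.
  exists `|\sum_i f i 0|, (fun=> 0) => //=.
  by rewrite /psinorm /= big1 ?eqxx // => i _; rewrite normr0.
move=> _ [x x_le1 <-]; set y := fun i => c^-1 *: x i.
have y_le1 : psinorm psi y <= 1.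
  rewrite psinormZ ?invr_gt0 // ler_pdivrMl //.
  exact: le_trans (psi_le x) (ler_wpM2l (ltW c_gt0) x_le1).
have -> : \sum_i f i (x i) = c * \sum_i f i (y i).
  rewrite mulr_sumr; apply: eq_bigr => i _.
  by rewrite cont_lin_familyZ // mulrA mulfV ?mul1r // gt_eqF.
rewrite normrM gtr0_norm //; apply: ler_wpM2l; first exact: ltW.
by apply: (ub_le_sup (dualnorm_has_ub psiP f_cl)); exists y.
Qed.

End PsiNorm.

Theorem proposition3p5 (R : realType) (n : nat) (X : normedModType R)
  (psi phi : 'rV[R]_n -> R) :
  (2 <= n)%N -> PsiClass psi -> PsiClass phi ->
  let m := ratio_min psi phi in
  let M := ratio_max psi phi in
  let ms := ratio_min (dualfun psi) (dualfun phi) in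
  let Ms := ratio_max (dualfun psi) (dualfun phi) in
  (* (i) *)
  (1 / n%:R <= m /\
   (forall t, Omega n t -> m <= psi t / phi t /\ psi t / phi t <= M) /\
   M <= n%:R) /\
  (* (ii) *)
  (1 / n%:R <= ms /\
   (forall t, Omega n t -> ms <= dualfun psi t / dualfun phi t /\
                         dualfun psi t / dualfun phi t <= Ms) /\
   Ms <= n%:R) /\
  (* (iii) *)
  (m * Ms = 1 /\ M * ms = 1) /\
  (* (iv) *)
  (forall x : 'I_n -> X,
     m * psinorm phi x <= psinorm psi x /\ psinorm psi x <= M * psinorm phi x) /\
  (* (v) *)
  (forall f : 'I_n -> X -> R, cont_lin_family f ->
     (1 / M) * dualnorm phi f <= dualnorm psi f /\
     dualnorm psi f <= (1 / m) * dualnorm phi f) /\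
  (* (vi) *)
  ((forall t, Omega n t -> phi t <= psi t) <->
   (forall s, Omega n s -> dualfun psi s <= dualfun phi s)) /\
  (* (vii) *)
  ((forall t, Omega n t -> psi t <= phi t) <->
   (forall s, Omega n s -> dualfun phi s <= dualfun psi s)).
Proof.
move=> n2 psiP phiP m M ms Ms.
have n_gt0 : (0 < n)%N by apply: leq_trans n2.
have psiB := PsiClass_bounded psiP; have phiB := PsiClass_bounded phiP.
have dpsiB := dualfun_bounded psiP; have dphiB := dualfun_bounded phiP.
have m_gt0 : 0 < m := ratio_min_gt0 n_gt0 psiB phiB.
have M_gt0 : 0 < M := ratio_max_gt0 n_gt0 psiB phiB.
have norm_bounds (x : 'I_n -> X) :
    m * psinorm phi x <= psinorm psi x /\ psinorm psi x <= M * psinorm phi x.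
  split; rewrite -psinormMl; apply: psinorm_le => t tO.
    exact: ratio_min_mul_le.
  exact: ratio_max_mul_ge.
split; first exact: ratio_bounds.
split; first exact: ratio_bounds.
split.
  split; first exact: ratio_min_mul_ratio_max (dualfun_le_scaled psiP phiP).
  rewrite mulrC; apply: ratio_min_mul_ratio_max => // c c_gt0.
  exact: iff_sym (dualfun_le_scaled phiP psiP c_gt0).
split; first exact: norm_bounds.
split.
  move=> f f_cl; rewrite !div1r; split.
    rewrite ler_pdivrMl //; apply: dualnorm_le_scaled => // x.
    exact: (norm_bounds x).2.
  apply: dualnorm_le_scaled; rewrite ?invr_gt0 // => x.
  by rewrite ler_pdivlMl // (norm_bounds x).1.
by split; apply: dualfun_antitone_iff.
Qed.
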